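(* Consider the cyclically closed $2\times2\times M$ Ising-type model described in the context, with real couplings $J_1,\dots,J_5$, temperature $T>0$ and $\beta=1/(k_BT)$. Set $p_1=e^{\beta J_1}$, $q_1=e^{\beta J_2}$, $q_2=e^{2\beta J_3}$, $u_1=e^{\beta J_4}$, $v_1=e^{4\beta J_5}$ and $$\lambda_{\max}=4p_1^2u_1^{-2}v_1^{-1}+4u_1^2p_1^{-2}v_1^{-1}+4v_1q_2^{-2}+2q_2^2v_1q_1^{-4}+q_1^4q_2^2v_1p_1^{-4}u_1^{-4}+p_1^4q_1^4q_2^2u_1^4v_1 .$$ Then the free energy per site $f(T)=-k_BT\lim_{M\to\infty}\frac{1}{4M}\ln Z_M$ equals $-\frac{k_BT}{4}\ln\lambda_{\max}$, the internal energy per site $u(T)=-T^2\partial_T[f/T]$ equals $k_BT^2\partial_T[\frac14\ln\lambda_{\max}]$, and the heat capacity per site $C=\partial_T u$ equals $2k_BT\partial_T[\frac14\ln\lambda_{\max}]+k_BT^2\partial_T^2[\frac14\ln\lambda_{\max}]$.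
   Context: Sites $t_i^m$, $i\in\{0,1,2,3\}$ (indices mod 4), $m\in\{0,\dots,M-1\}$, cyclically closed ($t_i^M\equiv t_i^0$), spins $\sigma_i^m\in\{-1,1\}$. The cube energy is $$\mathcal H^m=-\sum_{r=0}^{3}\Big(J_1\sigma_r^m\sigma_r^{m+1}+J_2\sigma_r^m\sigma_{r+1}^m\sigma_r^{m+1}\sigma_{r+1}^{m+1}+J_3\sigma_r^m\sigma_{r+2}^m\sigma_r^{m+1}\sigma_{r+2}^{m+1}+J_4\prod_{i\ne r}\sigma_i^m\sigma_i^{m+1}+J_5\prod_{i=0}^3\sigma_i^m\sigma_i^{m+1}\Big),$$ $\mathcal H=\sum_{m=0}^{M-1}\mathcal H^m$, and $Z_M=\sum_{\sigma\in\{-1,1\}^{4M}}e^{-\beta\mathcal H(\sigma)}$. *)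

From HB Require Import structures.
From mathcomp Require Import all_boot all_order all_algebra.
From mathcomp Require Import all_classical all_reals all_analysis.
Set Implicit Arguments. Unset Strict Implicit. Unset Printing Implicit Defensive.
Import Order.TTheory GRing.Theory Num.Theory.
Import numFieldNormedType.Exports.
Local Open Scope classical_set_scope.
Local Open Scope ring_scope.

Section Model.
Variable R : realType.

Definition spin (b : bool) : R := if b then 1 else -1.

(* a configuration: sigma_i^m = spin (s (m, i)), m : 'I_M, i : 'I_4,
   with cyclic successor ordS (so t_i^M = t_i^0 and indices of i mod 4). *)
Definition config (M : nat) := {ffun 'I_M * 'I_4 -> bool}.

Definition sg (M : nat) (s : config M) (m : 'I_M) (i : 'I_4) : R := spin (s (m, i)).

Definition Hcube (J1 J2 J3 J4 J5 : R) (M : nat) (s : config M) (m : 'I_M) : R :=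
  let m' := ordS m in
  - \sum_(r < 4)
      (J1 * sg s m r * sg s m' r
     + J2 * sg s m r * sg s m (ordS r) * sg s m' r * sg s m' (ordS r)
     + J3 * sg s m r * sg s m (ordS (ordS r)) * sg s m' r * sg s m' (ordS (ordS r))
     + J4 * \prod_(i < 4 | i != r) (sg s m i * sg s m' i)
     + J5 * \prod_(i < 4) (sg s m i * sg s m' i)).

Definition Htot (J1 J2 J3 J4 J5 : R) (M : nat) (s : config M) : R :=
  \sum_(m < M) Hcube J1 J2 J3 J4 J5 s m.

Definition Zpart (J1 J2 J3 J4 J5 beta : R) (M : nat) : R :=
  \sum_(s : config M) expR (- beta * Htot J1 J2 J3 J4 J5 s).

Definition betaT (kB T : R) : R := 1 / (kB * T).

Definition lambda_max (kB J1 J2 J3 J4 J5 T : R) : R :=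
  let b := betaT kB T in
  let p1 := expR (b * J1) in
  let q1 := expR (b * J2) in
  let q2 := expR (2 * b * J3) in
  let u1 := expR (b * J4) in
  let v1 := expR (4 * b * J5) in
  4 * p1 ^+ 2 * u1 ^- 2 * v1 ^-1 + 4 * u1 ^+ 2 * p1 ^- 2 * v1 ^-1
  + 4 * v1 * q2 ^- 2 + 2 * q2 ^+ 2 * v1 * q1 ^- 4
  + q1 ^+ 4 * q2 ^+ 2 * v1 * p1 ^- 4 * u1 ^- 4
  + p1 ^+ 4 * q1 ^+ 4 * q2 ^+ 2 * u1 ^+ 4 * v1.

Definition lnZ_seq (kB J1 J2 J3 J4 J5 T : R) (M : nat) : R :=
  ln (Zpart J1 J2 J3 J4 J5 (betaT kB T) M) / (4 * M%:R).

Definition free_energy (kB J1 J2 J3 J4 J5 T : R) : R :=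
  - kB * T * lim (lnZ_seq kB J1 J2 J3 J4 J5 T @ \oo).

Definition internal_energy (kB J1 J2 J3 J4 J5 T : R) : R :=
  - T ^+ 2 * derive1 (fun t => free_energy kB J1 J2 J3 J4 J5 t / t) T.

Definition heat_capacity (kB J1 J2 J3 J4 J5 T : R) : R :=
  derive1 (internal_energy kB J1 J2 J3 J4 J5) T.

Definition quarter_ln_lambda (kB J1 J2 J3 J4 J5 : R) : R -> R :=
  fun t => ln (lambda_max kB J1 J2 J3 J4 J5 t) / 4.

End Model.

(* Every term of the cube energy H^m depends on the spins only through the
   bond variables sigma_i^m sigma_i^(m+1), so Z_M is a sum over spin
   configurations of products of M one-cube Boltzmann weights of the bonds.
   Trading the spins of the layers m < M - 1 for the bonds between consecutive
   layers is a bijection under which all bonds but the last one, which the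
   cyclic closure ties to the others, range freely.  Hence
   c * 16 * L^(M-1) <= Z_M <= 16 * L^M, where L(beta) is the sum of the 16
   one-cube weights and c > 0 the smallest of them, so (1/M) ln Z_M --> ln L;
   expanding the 16 weights gives L = lambda_max.  The free energy is thus
   -k_B T q with q = (1/4) ln lambda_max smooth for T > 0, and the formulas
   for u and C are the chain and product rules. *)

From HB Require Import structures.
From mathcomp Require Import all_boot all_order all_algebra.
From mathcomp Require Import all_classical all_reals all_analysis.
From mathcomp Require Import ring zify.
Import Order.TTheory GRing.Theory Num.Theory.
Import numFieldNormedType.Exports.
Local Open Scope classical_set_scope.
Local Open Scope ring_scope.

Set Implicit Arguments. Unset Strict Implicit. Unset Printing Implicit Defensive.

Section DerivableCompositions.
Variable R : realType.
Implicit Types f g : R -> R.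

Lemma derivable_comp f g x :
  derivable f x 1 -> derivable g (f x) 1 -> derivable (g \o f) x 1.
Proof.
by move=> /derivableP df /derivableP dg; apply: ex_derive; exact: is_derive1_comp.
Qed.

Lemma derivable_derive1_comp f g x :
  {near x, forall y, derivable f y 1} -> derivable (derive1 f) x 1 ->
  (forall y, derivable g y 1) -> (forall y, derivable (derive1 g) y 1) ->
  derivable (derive1 (g \o f)) x 1.
Proof.
move=> df ddf dg ddg.
apply: (@near_eq_derivable _ _ _ ((fun y => derive1 g (f y)) * derive1 f)).
  apply: filterS df => y dfy.
  by rewrite (derive1_comp dfy (dg _)).
exact: derivableM (derivable_comp (nbhs_singleton df) (ddg _)) ddf.
Qed.

Lemma derivable_derive1Mr f (r x : R) :
  {near x, forall y, derivable f y 1} -> derivable (derive1 f) x 1 ->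
  derivable (derive1 (fun y => f y * r)) x 1.
Proof.
move=> df ddf.
apply: (@near_eq_derivable _ _ _ (derive1 f * cst r)).
  by apply: filterS df => y dfy; rewrite derive1Mr.
exact: derivableM ddf (derivable_cst r x 1).
Qed.

End DerivableCompositions.

Lemma is_derive_bigsum (R : realType) (I : Type) (s : seq I) (F : I -> R -> R)
    (dF : I -> R) (x : R) :
  (forall i, is_derive x 1 (F i) (dF i)) ->
  is_derive x 1 (fun y => \sum_(i <- s) F i y) (\sum_(i <- s) dF i).
Proof.
move=> dFx; elim: s => [|i s IHs].
  under eq_fun do rewrite big_nil.
  by rewrite big_nil; exact: is_derive_cst.
under eq_fun do rewrite big_cons.
by rewrite big_cons; exact: is_deriveD.
Qed.

Section SumOfExponentials.
Variables (R : realType) (I : finType) (e : I -> R).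

Definition sumexp (b : R) : R := \sum_i expR (e i * b).

Definition sumexp' (b : R) : R := \sum_i e i * expR (e i * b).

Lemma sumexp_gt0 (i0 : I) (b : R) : 0 < sumexp b.
Proof.
rewrite /sumexp (bigD1 i0) //= ltr_pwDl ?expR_gt0 //.
by apply: sumr_ge0 => i _; rewrite expR_ge0.
Qed.

Lemma is_derive_expR_scale (c x : R) :
  is_derive x 1 (fun b => expR (c * b)) (c * expR (c * x)).
Proof.
have := is_derive1_comp (is_derive_expR (c * x)) (is_deriveZ c (is_derive_id x 1)).
by rewrite /GRing.scale /= mulr1 mulrC.
Qed.

Lemma is_derive_sumexp (b : R) : is_derive b 1 sumexp (sumexp' b).
Proof. exact: is_derive_bigsum (fun i => is_derive_expR_scale (e i) b). Qed.

Lemma derivable_sumexp' (b : R) : derivable sumexp' b 1.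
Proof.
apply: ex_derive.
exact: is_derive_bigsum (fun i => is_deriveZ (e i) (is_derive_expR_scale (e i) b)).
Qed.

End SumOfExponentials.

Lemma is_derive_ln_sumexp (R : realType) (I : finType) (e : I -> R) (i0 : I) (b : R) :
  is_derive b 1 (fun b => ln (sumexp e b)) (sumexp' e b / sumexp e b).
Proof.
have := is_derive1_comp (is_derive1_ln (sumexp_gt0 e i0 b)) (is_derive_sumexp e b).
by rewrite mulrC.
Qed.

Lemma derivable_derive1_ln_sumexp (R : realType) (I : finType) (e : I -> R) (i0 : I)
    (b : R) :
  derivable (derive1 (fun b => ln (sumexp e b))) b 1.
Proof.
have -> : derive1 (fun b => ln (sumexp e b)) = sumexp' e * (fun b => (sumexp e b)^-1).
  apply/funext => c; rewrite derive1E.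
  by have [_ ->] := is_derive_ln_sumexp e i0 c.
apply: derivableM; first exact: derivable_sumexp'.
apply: derivableV; first exact: lt0r_neq0 (sumexp_gt0 e i0 b).
by apply: ex_derive; exact: is_derive_sumexp.
Qed.

Section InverseTemperature.
Variables (R : realType) (kB : R).
Hypothesis kB_gt0 : 0 < kB.

Lemma is_derive_betaT (t : R) : 0 < t ->
  is_derive t 1 (betaT kB) (- kB * betaT kB t ^+ 2).
Proof.
move=> t0; have kBt0 : kB * t != 0 by rewrite mulf_neq0 ?gt_eqF.
have -> : betaT kB = (fun y => (kB * y)^-1).
  by apply/funext => y; rewrite /betaT div1r.
apply: is_derive_eq (is_deriveV kBt0 (is_deriveZ kB (is_derive_id t 1))) _.
by rewrite /GRing.scale /= exprVn mulr1 !mulNr mulrC.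
Qed.

Lemma derivable_betaT (t : R) : 0 < t -> derivable (betaT kB) t 1.
Proof. by move=> t0; apply: ex_derive; exact: is_derive_betaT. Qed.

Lemma derivable_derive1_betaT (T : R) : 0 < T -> derivable (derive1 (betaT kB)) T 1.
Proof.
move=> T0.
apply: (@near_eq_derivable _ _ _ ((- kB) \*: betaT kB * betaT kB)).
  near=> t; have t0 : 0 < t by near: t; exact: lt_nbhsr.
  rewrite derive1E; have [_ ->] := is_derive_betaT t0.
  change (- kB * betaT kB t * betaT kB t = - kB * betaT kB t ^+ 2).
  by rewrite expr2; ring.
exact: derivableM (derivableZ (derivable_betaT T0)) (derivable_betaT T0).
Unshelve. all: by end_near. Qed.

End InverseTemperature.

Section ThermodynamicIdentities.
Variables (R : realType) (kB : R) (q : R -> R).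

Let free_over_T (t : R) := - kB * t * q t / t.
Let internal (t : R) := - t ^+ 2 * derive1 free_over_T t.

Lemma is_derive_free_over_T t : 0 < t -> derivable q t 1 ->
  is_derive t 1 free_over_T (- kB * derive1 q t).
Proof.
move=> t0 /derivableP dq; rewrite derive1E.
apply: near_eq_is_derive (is_deriveZ (- kB) dq).
by near=> s; rewrite /free_over_T /= mulrAC mulfK // gt_eqF //; near: s; exact: lt_nbhsr.
Unshelve. all: by end_near. Qed.

Lemma internal_energyE t : 0 < t -> derivable q t 1 ->
  internal t = kB * t ^+ 2 * derive1 q t.
Proof.
move=> t0 dq; rewrite /internal derive1E.
by have [_ ->] := is_derive_free_over_T t0 dq; ring.
Qed.

Lemma is_derive_internal_energy T : 0 < T ->
  (forall t, 0 < t -> derivable q t 1) -> derivable (derive1 q) T 1 ->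
  is_derive T 1 internal
    (2 * kB * T * derive1 q T + kB * T ^+ 2 * derive1 (derive1 q) T).
Proof.
move=> T0 dq ddq.
have ddq' : is_derive T 1 (derive1 q) (derive1 (derive1 q) T).
  by rewrite derive1E; exact: derivableP.
have dkt2 := is_deriveM (is_deriveZ kB (is_derive_id T 1)) (is_derive_id T 1).
apply: near_eq_is_derive (is_derive_eq (is_deriveM dkt2 ddq') _).
  near=> t; have t0 : 0 < t by near: t; exact: lt_nbhsr.
  rewrite (internal_energyE t0 (dq t t0)).
  change (kB * t * t * derive1 q t = kB * t ^+ 2 * derive1 q t).
  by rewrite expr2 mulrA.
change (kB * T * T * derive1 (derive1 q) T
        + derive1 q T * (kB * T * 1 + T * (kB * 1))
        = 2 * kB * T * derive1 q T + kB * T ^+ 2 * derive1 (derive1 q) T).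
ring.
Unshelve. all: by end_near. Qed.

End ThermodynamicIdentities.

Lemma ln_cvg_of_geometric_bounds (R : realType) (z : nat -> R) (a c L : R) :
  0 < a -> 0 < L -> (forall n, a * L ^+ n <= z n.+1 <= c * L ^+ n) ->
  (fun M => ln (z M) / M%:R) @ \oo --> ln L.
Proof.
move=> a0 L0 zb.
have cvg_to_lnL k : (fun n => ln L + k * harmonic n) @ \oo --> ln L.
  rewrite -[X in _ --> X]addr0 -(mulr0 k).
  exact: cvgD (cvg_cst _) (cvgMl_tmp cvg_harmonic).
rewrite -cvg_shiftS /=.
apply: (squeeze_cvgr _ (cvg_to_lnL (ln a - ln L)) (cvg_to_lnL (ln c - ln L))).
apply: nearW => n; have /andP[lo hi] := zb n.
have aL0 : 0 < a * L ^+ n by rewrite mulr_gt0 ?exprn_gt0.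
have cL0 : 0 < c * L ^+ n := lt_le_trans aL0 (le_trans lo hi).
have c0 : 0 < c by rewrite -(pmulr_lgt0 _ (exprn_gt0 n L0)).
have z0 : 0 < z n.+1 := lt_le_trans aL0 lo.
have ln_bound d : 0 < d -> ln L + (ln d - ln L) * harmonic n
    = ln (d * L ^+ n) / n.+1%:R.
  move=> d0; rewrite lnM ?posrE ?exprn_gt0 // lnXn // /harmonic /=.
  by rewrite -natr1; field; rewrite lt0r_neq0 // ltr_wpDl.
rewrite !ln_bound // !ler_pM2r ?invr_gt0 ?ltr0n //.
by rewrite !ler_ln ?posrE ?lo ?hi.
Qed.

Section BondVariables.
Local Notation bonds := {ffun 'I_4 -> bool}.

Definition bond M (s : config M) (m : 'I_M) : bonds :=
  [ffun i => s (m, i) (+) s (ordS m, i)].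

Definition row M (t : config M) (m : 'I_M) : bonds := [ffun i => t (m, i)].

(* Inverse of the change of variables that replaces the spins of the layers
   m < n by the bonds between layers m and m + 1, keeping the last layer. *)
Definition spins_of_bonds n (t : config n.+1) : config n.+1 :=
  [ffun p : 'I_n.+1 * 'I_4 => \big[addb/false]_(k < n.+1 | (p.1 <= k)%N) t (k, p.2)].

Lemma ordS_val n (m : 'I_n.+1) : m != ord_max -> val (ordS m) = m.+1.
Proof.
rewrite -(inj_eq val_inj) /= => m_max; rewrite modn_small //.
by have := ltn_ord m; lia.
Qed.

Lemma spins_of_bondsE n (t : config n.+1) m i :
  spins_of_bonds t (m, i)
  = t (m, i) (+) (if m != ord_max then spins_of_bonds t (ordS m, i) else false).
Proof.
rewrite [LHS]ffunE /= (bigD1 m) //=; congr (_ (+) _).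
case: eqP => [->|/eqP m_max] /=.
  rewrite big_pred0 // => k /=; rewrite -(inj_eq val_inj) /=.
  by have := ltn_ord k; lia.
rewrite ffunE; apply: eq_bigl => k /=.
have /= -> := ordS_val m_max.
by rewrite -(inj_eq val_inj) /=; lia.
Qed.

Lemma spins_of_bondsK n (t : config n.+1) m i :
  t (m, i) = spins_of_bonds t (m, i)
             (+) (if m != ord_max then spins_of_bonds t (ordS m, i) else false).
Proof. by rewrite spins_of_bondsE addbK. Qed.

Lemma spins_of_bonds_inj n : injective (@spins_of_bonds n).
Proof.
by move=> t t' tt'; apply/ffunP => -[m i]; rewrite spins_of_bondsK tt' -spins_of_bondsK.
Qed.

Lemma bond_spins_of_bonds n (t : config n.+1) m :
  m != ord_max -> bond (spins_of_bonds t) m = row t m.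
Proof.
move=> m_max; apply/ffunP => i.
by rewrite [LHS]ffunE [RHS]ffunE (spins_of_bondsK t m i) m_max.
Qed.

Variable R : comPzRingType.

Lemma sum_open_chain (w : bonds -> R) n :
  \sum_(t : config n.+1) \prod_(m < n.+1 | m != ord_max) w (row t m)
  = #|{: bonds}|%:R * (\sum_d w d) ^+ n.
Proof.
pose layers (g : {ffun 'I_n.+1 -> bonds}) : config n.+1 := [ffun p => g p.1 p.2].
have layers_bij : bijective layers.
  exists (fun t => [ffun m => row t m]) => [g|t]; apply/ffunP.
    by move=> m; apply/ffunP => i; rewrite !ffunE.
  by move=> [m i]; rewrite !ffunE.
rewrite (reindex layers) /=; last exact: onW_bij.
pose F (m : 'I_n.+1) d := if m != ord_max then w d else 1.
transitivity (\sum_(g : {ffun 'I_n.+1 -> bonds}) \prod_(m < n.+1) F m (g m)).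
  apply: eq_bigr => g _; rewrite big_mkcond; apply: eq_bigr => m _ /=.
  by rewrite /F; case: ifP => // _; congr w; apply/ffunP => i; rewrite !ffunE.
rewrite -bigA_distr_bigA (bigD1 ord_max) //= /F eqxx sumr_const.
rewrite (eq_bigr (fun _ => \sum_d w d)) => [|m ->//].
rewrite prodr_const; congr (_ * _ ^+ _).
by rewrite cardC1 card_ord.
Qed.

End BondVariables.

Lemma closed_chain_bounds (R : numDomainType) (w : {ffun 'I_4 -> bool} -> R) c n :
  (forall d, 0 <= w d) -> (forall d, c <= w d) ->
  c * (#|{: {ffun 'I_4 -> bool}}|%:R * (\sum_d w d) ^+ n)
    <= \sum_(s : config n.+1) \prod_(m < n.+1) w (bond s m)
    <= (\sum_d w d) * (#|{: {ffun 'I_4 -> bool}}|%:R * (\sum_d w d) ^+ n).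
Proof.
move=> w_ge0 c_le; rewrite -sum_open_chain !mulr_sumr.
rewrite [X in _ <= X <= _](reindex_inj (@spins_of_bonds_inj n)) /=.
have closed_split t : \prod_(m < n.+1) w (bond (spins_of_bonds t) m)
    = w (bond (spins_of_bonds t) ord_max)
      * \prod_(m < n.+1 | m != ord_max) w (row t m).
  rewrite (bigD1 ord_max) //=; congr (_ * _).
  by apply: eq_bigr => m m_max; rewrite bond_spins_of_bonds.
have open_ge0 t : 0 <= \prod_(m < n.+1 | m != ord_max) w (row t m).
  by apply: prodr_ge0 => m _.
have w_le d : w d <= \sum_d w d.
  by rewrite (bigD1 d) //= lerDl; apply: sumr_ge0.
by apply/andP; split; apply: ler_sum => t _; rewrite closed_split ler_wpM2r.
Qed.

Lemma sum_bonds (R : nmodType) (F : {ffun 'I_4 -> bool} -> R) :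
  \sum_d F d
  = \sum_a1 \sum_a2 \sum_a3 \sum_a4 F [ffun i : 'I_4 => nth false [:: a1; a2; a3; a4] i].
Proof.
pose of_tuple (p : bool * bool * bool * bool) : {ffun 'I_4 -> bool} :=
  [ffun i : 'I_4 => nth false [:: p.1.1.1; p.1.1.2; p.1.2; p.2] i].
have of_tuple_bij : bijective of_tuple.
  exists (fun d : {ffun 'I_4 -> bool} => (d ord0, d (inord 1), d (inord 2), d (inord 3))).
    by move=> [[[a1 a2] a3] a4]; rewrite !ffunE !inordK.
  move=> d; apply/ffunP => -[[|[|[|[|i]]]] lti] //=; rewrite ffunE /=;
    by congr (d _); apply: val_inj; rewrite /= ?inordK.
have sum_pair (A B : finType) (G : A * B -> R) :
    \sum_(p : A * B) G p = \sum_a \sum_c G (a, c).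
  by rewrite pair_big; apply: eq_bigr => -[a c].
rewrite (reindex of_tuple) /=; last exact: onW_bij.
by rewrite !sum_pair.
Qed.

Section CubeEnergy.
Variables (R : realType) (J1 J2 J3 J4 J5 : R).

(* A bond is [true] when the two spins it joins are antiparallel, so that
   their product is [bond_sign] of the bond. *)
Definition bond_sign (b : bool) : R := if b then -1 else 1.

Lemma spinM a b : spin R a * spin R b = bond_sign (a (+) b).
Proof. by case: a; case: b; rewrite /= ?mulrNN ?mulr1 ?mul1r. Qed.

Lemma bond_signD a b : bond_sign (a (+) b) = bond_sign a * bond_sign b.
Proof. by case: a; case: b; rewrite /= ?mulrNN ?mulr1 ?mul1r. Qed.

Definition bond_energy (d : {ffun 'I_4 -> bool}) : R :=
  \sum_(r < 4)
    (J1 * bond_sign (d r)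
   + J2 * bond_sign (d r) * bond_sign (d (ordS r))
   + J3 * bond_sign (d r) * bond_sign (d (ordS (ordS r)))
   + J4 * \prod_(i < 4 | i != r) bond_sign (d i)
   + J5 * \prod_(i < 4) bond_sign (d i)).

Lemma Hcube_bond M (s : config M) m :
  Hcube J1 J2 J3 J4 J5 s m = - bond_energy (bond s m).
Proof.
rewrite /Hcube /bond_energy; congr (- _); apply: eq_bigr => r _.
have bondP (P : pred 'I_4) :
    \prod_(i < 4 | P i) (sg R s m i * sg R s (ordS m) i)
    = \prod_(i < 4 | P i) bond_sign (bond s m i).
  by apply: eq_bigr => i _; rewrite ffunE /sg spinM.
by rewrite !bondP /sg !ffunE -!spinM; ring.
Qed.

Lemma Zpart_bonds b M : Zpart J1 J2 J3 J4 J5 b M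
  = \sum_(s : config M) \prod_(m < M) expR (bond_energy (bond s m) * b).
Proof.
apply: eq_bigr => s _; rewrite /Htot (eq_bigr _ (fun m _ => Hcube_bond s m)).
rewrite sumrN mulNr mulrN opprK mulr_sumr expR_sum.
by apply: eq_bigr => m _; rewrite mulrC.
Qed.

Lemma ln_Zpart_cvg b :
  (fun M => ln (Zpart J1 J2 J3 J4 J5 b M) / M%:R) @ \oo
  --> ln (sumexp bond_energy b).
Proof.
pose w d := expR (bond_energy d * b).
pose c := \big[Order.min/1]_d w d.
have c_gt0 : 0 < c.
  apply: (big_ind (fun x : R => 0 < x)) => [//|x y x0 y0|d _]; last exact: expR_gt0.
  by rewrite lt_min x0 y0.
pose K : R := #|{: {ffun 'I_4 -> bool}}|%:R.
have K_gt0 : 0 < K by rewrite ltr0n; apply/card_gt0P; exists [ffun=> false].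
apply: (@ln_cvg_of_geometric_bounds _ _ (c * K) (sumexp bond_energy b * K)).
- exact: mulr_gt0.
- exact: sumexp_gt0 [ffun=> false] b.
move=> n; rewrite Zpart_bonds /sumexp -!mulrA.
by apply: closed_chain_bounds => [d|d]; [exact: expR_ge0 | exact: bigmin_le].
Qed.

End CubeEnergy.

Section ClosedForm.
Variables (R : realType) (J1 J2 J3 J4 J5 : R).
Local Notation bond_sign := (@bond_sign R).

Lemma bond_energy_tuple a1 a2 a3 a4 :
  bond_energy J1 J2 J3 J4 J5 [ffun i : 'I_4 => nth false [:: a1; a2; a3; a4] i]
  = bond_sign a1 * J1 + bond_sign (a1 (+) a2) * J2 + bond_sign (a1 (+) a3) * J3
  + bond_sign (a2 (+) a3 (+) a4) * J4 + bond_sign (a1 (+) a2 (+) a3 (+) a4) * J5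
  + bond_sign a2 * J1 + bond_sign (a2 (+) a3) * J2 + bond_sign (a2 (+) a4) * J3
  + bond_sign (a1 (+) a3 (+) a4) * J4 + bond_sign (a1 (+) a2 (+) a3 (+) a4) * J5
  + bond_sign a3 * J1 + bond_sign (a3 (+) a4) * J2 + bond_sign (a3 (+) a1) * J3
  + bond_sign (a1 (+) a2 (+) a4) * J4 + bond_sign (a1 (+) a2 (+) a3 (+) a4) * J5
  + bond_sign a4 * J1 + bond_sign (a4 (+) a1) * J2 + bond_sign (a4 (+) a2) * J3
  + bond_sign (a1 (+) a2 (+) a3) * J4 + bond_sign (a1 (+) a2 (+) a3 (+) a4) * J5.
Proof.
rewrite /bond_energy !big_ord_recr big_ord0 /=.
rewrite !(big_mkcond (fun i => i != _)) /= !big_ord_recr !big_ord0 /= !ffunE /=.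
by rewrite !bond_signD; ring.
Qed.

Lemma expR_bond_sign e y :
  expR (bond_sign e * y) = if e then (expR y)^-1 else expR y.
Proof. by case: e; rewrite /= ?mulN1r ?mul1r ?expRN. Qed.

Lemma sumexp_bond_energyE b : sumexp (bond_energy J1 J2 J3 J4 J5) b =
  let p1 := expR (b * J1) in
  let q1 := expR (b * J2) in
  let q2 := expR (2 * b * J3) in
  let u1 := expR (b * J4) in
  let v1 := expR (4 * b * J5) in
  4 * p1 ^+ 2 * u1 ^- 2 * v1 ^-1 + 4 * u1 ^+ 2 * p1 ^- 2 * v1 ^-1
  + 4 * v1 * q2 ^- 2 + 2 * q2 ^+ 2 * v1 * q1 ^- 4
  + q1 ^+ 4 * q2 ^+ 2 * v1 * p1 ^- 4 * u1 ^- 4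
  + p1 ^+ 4 * q1 ^+ 4 * q2 ^+ 2 * u1 ^+ 4 * v1.
Proof.
have weightE a1 a2 a3 a4 : expR (bond_energy J1 J2 J3 J4 J5
      [ffun i : 'I_4 => nth false [:: a1; a2; a3; a4] i] * b)
    = \prod_(e <- [:: (a1, J1); (a1 (+) a2, J2); (a1 (+) a3, J3);
          (a2 (+) a3 (+) a4, J4); (a1 (+) a2 (+) a3 (+) a4, J5);
          (a2, J1); (a2 (+) a3, J2); (a2 (+) a4, J3);
          (a1 (+) a3 (+) a4, J4); (a1 (+) a2 (+) a3 (+) a4, J5);
          (a3, J1); (a3 (+) a4, J2); (a3 (+) a1, J3);
          (a1 (+) a2 (+) a4, J4); (a1 (+) a2 (+) a3 (+) a4, J5);
          (a4, J1); (a4 (+) a1, J2); (a4 (+) a2, J3);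
          (a1 (+) a2 (+) a3, J4); (a1 (+) a2 (+) a3 (+) a4, J5)])
        (if e.1 then (expR (b * e.2))^-1 else expR (b * e.2)).
  rewrite bond_energy_tuple !big_cons big_nil mulr1 !mulrDl !expRD.
  by rewrite -!mulrA !(mulrC _ b) !expR_bond_sign.
rewrite /sumexp sum_bonds !big_bool !weightE !big_cons big_nil /=.
rewrite -!(mulrA _ b) !expRM_natl.
have := expR_gt0 (b * J1); have := expR_gt0 (b * J2); have := expR_gt0 (b * J3).
have := expR_gt0 (b * J4); have := expR_gt0 (b * J5).
set x1 := expR (b * J1); set x2 := expR (b * J2); set x3 := expR (b * J3).
set x4 := expR (b * J4); set x5 := expR (b * J5).
by move=> x5_gt0 x4_gt0 x3_gt0 x2_gt0 x1_gt0; field; rewrite !gt_eqF.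
Qed.

Lemma lambda_maxE kB t :
  lambda_max kB J1 J2 J3 J4 J5 t = sumexp (bond_energy J1 J2 J3 J4 J5) (betaT kB t).
Proof. by rewrite sumexp_bond_energyE. Qed.

End ClosedForm.

Section CubeThermodynamics.
Variables (R : realType) (kB J1 J2 J3 J4 J5 : R).
Hypothesis kB_gt0 : 0 < kB.
Local Notation q := (quarter_ln_lambda kB J1 J2 J3 J4 J5).
Local Notation ln_sumexp := (fun b => ln (sumexp (bond_energy J1 J2 J3 J4 J5) b)).

Lemma lnZ_seq_cvg t : lnZ_seq kB J1 J2 J3 J4 J5 t @ \oo --> q t.
Proof.
rewrite /quarter_ln_lambda lambda_maxE.
have -> : lnZ_seq kB J1 J2 J3 J4 J5 t
    = (fun M => ln (Zpart J1 J2 J3 J4 J5 (betaT kB t) M) / M%:R * 4^-1).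
  by apply/funext => M; rewrite /lnZ_seq invfM mulrA mulrAC.
apply: cvgMr_tmp; exact: ln_Zpart_cvg.
Qed.

Lemma free_energyE : free_energy kB J1 J2 J3 J4 J5 = fun t => - kB * t * q t.
Proof. by apply/funext => t; rewrite /free_energy (cvg_lim _ (lnZ_seq_cvg (t := t))). Qed.

Lemma quarter_ln_lambdaE : q = fun t => (ln_sumexp \o betaT kB) t * 4^-1.
Proof. by apply/funext => t; rewrite /quarter_ln_lambda lambda_maxE. Qed.

Lemma derivable_ln_sumexp b : derivable ln_sumexp b 1.
Proof. by apply: ex_derive; exact: (is_derive_ln_sumexp _ [ffun=> false]). Qed.

Lemma derivable_quarter_ln_lambda t : 0 < t -> derivable q t 1.
Proof.
move=> t0; rewrite quarter_ln_lambdaE.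
apply: (@derivableM _ _ (ln_sumexp \o betaT kB) (cst 4^-1)).
  exact: derivable_comp (derivable_betaT kB_gt0 t0) (derivable_ln_sumexp (b := _)).
exact: derivable_cst.
Qed.

Lemma derivable_derive1_quarter_ln_lambda T : 0 < T -> derivable (derive1 q) T 1.
Proof.
move=> T0; rewrite quarter_ln_lambdaE.
have near_derivable : {near T, forall t, derivable (betaT kB) t 1}.
  by near=> t; apply: derivable_betaT => //; near: t; exact: lt_nbhsr.
apply: derivable_derive1Mr.
  apply: filterS near_derivable => t dt.
  exact: derivable_comp dt (derivable_ln_sumexp (b := _)).
apply: derivable_derive1_comp near_derivable _ (fun b => derivable_ln_sumexp (b := b)) _.
- exact: derivable_derive1_betaT.
- exact: derivable_derive1_ln_sumexp _ [ffun=> false].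
Unshelve. all: by end_near. Qed.

End CubeThermodynamics.

Unset Implicit Arguments. Set Strict Implicit.

Theorem theorem4 (R : realType) (kB J1 J2 J3 J4 J5 T : R) :
  0 < kB -> 0 < T ->
  [/\ lnZ_seq kB J1 J2 J3 J4 J5 T @ \oo --> quarter_ln_lambda kB J1 J2 J3 J4 J5 T,
      free_energy kB J1 J2 J3 J4 J5 T
        = - (kB * T / 4) * ln (lambda_max kB J1 J2 J3 J4 J5 T),
      derivable (fun t => free_energy kB J1 J2 J3 J4 J5 t / t) T 1
      /\ internal_energy kB J1 J2 J3 J4 J5 T
        = kB * T ^+ 2 * derive1 (quarter_ln_lambda kB J1 J2 J3 J4 J5) T &
      derivable (internal_energy kB J1 J2 J3 J4 J5) T 1
      /\ heat_capacity kB J1 J2 J3 J4 J5 T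
        = 2 * kB * T * derive1 (quarter_ln_lambda kB J1 J2 J3 J4 J5) T
          + kB * T ^+ 2 * derive1n 2 (quarter_ln_lambda kB J1 J2 J3 J4 J5) T].
Proof.
move=> kB0 T0; set q := quarter_ln_lambda kB J1 J2 J3 J4 J5.
have dq t (t0 : 0 < t) : derivable q t 1 := derivable_quarter_ln_lambda kB0 t0.
have ddq : derivable (derive1 q) T 1 := derivable_derive1_quarter_ln_lambda kB0 T0.
have uE : internal_energy kB J1 J2 J3 J4 J5
    = fun t => - t ^+ 2 * derive1 (fun s => - kB * s * q s / s) t.
  by apply/funext => t; rewrite /internal_energy free_energyE.
have du := is_derive_internal_energy kB T0 dq ddq.
split.
- exact: lnZ_seq_cvg.
- by rewrite free_energyE /q /quarter_ln_lambda; ring.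
- split; last by rewrite uE; exact: (internal_energyE kB T0 (dq T T0)).
  rewrite free_energyE; apply: ex_derive; exact: (is_derive_free_over_T kB T0 (dq T T0)).
- split; first by rewrite uE; apply: ex_derive; exact: du.
  by rewrite /heat_capacity uE derive1E; have [_ ->] := du.
Qed.
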